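(* The inclusion $\mathrm{PF}(\Pi)\subseteq\mathrm{CDUS}(\Pi)$ does not hold in general: there exists a (finite) family of policies $\Pi$ such that $\mathrm{PF}(\Pi)\not\subseteq\mathrm{CDUS}(\Pi)$.
   Context: A family of policies $\Pi=\{\pi_1,\pi_2,\dots\}$ of a multi-objective decision problem with $d$ objectives is given, each $\pi$ having a random return vector $\mathbf{Z}^\pi\in\mathbb{R}^d$ with finite mean $\mathbf{V}^\pi=\mathbb{E}[\mathbf{Z}^\pi]$; the return distributions of the policies may be arbitrary (e.g. finitely supported). For $\mathbf{x},\mathbf{y}\in\mathbb{R}^d$: $\mathbf{y}\preceq_p\mathbf{x}$ iff $y_i\le x_i$ for all $i$; $\mathbf{x}\succ_p\mathbf{y}$ iff $x_i\ge y_i$ for all $i$ and $x_i>y_i$ for some $i$. CDF: $F_{\mathbf{X}}(\mathbf{x})=P(\mathbf{X}\preceq_p\mathbf{x})$; $\mathbf{X}\succeq_{\mathrm{FSD}}\mathbf{Y}$ iff $F_{\mathbf{X}}\le F_{\mathbf{Y}}$ pointwise, $\succ_{\mathrm{FSD}}$ additionally requiring strict inequality somewhere; $\mathbf{X}\succ_d\mathbf{Y}$ iff $\mathbf{X}\succeq_{\mathrm{FSD}}\mathbf{Y}$ and $X_j\succ_{\mathrm{FSD}}Y_j$ for some marginal $j$. For weights $\lambda\in\Delta^{|\Pi|}$ (probability vectors), $\sum_i\lambda_i\mathbf{Z}^{\pi_i}$ is the mixture distribution with CDF $\sum_i\lambda_iF_{\mathbf{Z}^{\pi_i}}$. $\mathrm{PF}(\Pi)=\{\pi\in\Pi:\nexists\pi'\in\Pi,\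 \mathbf{V}^{\pi'}\succ_p\mathbf{V}^\pi\}$; $\mathrm{CDUS}(\Pi)=\{\pi\in\Pi:\nexists\lambda\in\Delta^{|\Pi|},\ \sum_i\lambda_i\mathbf{Z}^{\pi_i}\succ_d\mathbf{Z}^\pi\}$. *)

From HB Require Import structures.
From mathcomp Require Import all_boot all_order all_algebra.
From mathcomp Require Import reals.
Set Implicit Arguments. Unset Strict Implicit. Unset Printing Implicit Defensive.
Import Order.TTheory GRing.Theory Num.Theory.
Local Open Scope ring_scope.

Section Defs.
Variable R : realType.
Variable d : nat.

(* A finitely supported distribution on R^d: a list of (weight, atom) pairs. *)
Definition fdist := seq (R * 'rV[R]_d).

Definition valid_fdist (Z : fdist) : Prop :=
  (forall p, p \in Z -> 0 <= p.1) /\ \sum_(p <- Z) p.1 = 1.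

Definition lep (y x : 'rV[R]_d) : bool := [forall i, y 0 i <= x 0 i].

Definition gtp (x y : 'rV[R]_d) : bool :=
  [forall i, y 0 i <= x 0 i] && [exists i, y 0 i < x 0 i].

Definition mean (Z : fdist) : 'rV[R]_d := \sum_(p <- Z) p.1 *: p.2.

Definition cdf (Z : fdist) (x : 'rV[R]_d) : R :=
  \sum_(p <- Z) p.1 * (lep p.2 x)%:R.

Definition mcdf (Z : fdist) (j : 'I_d) (t : R) : R :=
  \sum_(p <- Z) p.1 * ((p.2 0 j <= t)%R : bool)%:R.

Definition fsd_ge (X Y : fdist) : Prop := forall x, cdf X x <= cdf Y x.
Definition fsd_gt (X Y : fdist) : Prop :=
  fsd_ge X Y /\ exists x, cdf X x < cdf Y x.

Definition mfsd_gt (X Y : fdist) (j : 'I_d) : Prop :=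
  (forall t, mcdf X j t <= mcdf Y j t) /\ exists t, mcdf X j t < mcdf Y j t.

Definition ddom (X Y : fdist) : Prop := fsd_ge X Y /\ exists j, mfsd_gt X Y j.

Definition mixture n (lam : 'I_n -> R) (Pi : 'I_n -> fdist) : fdist :=
  flatten [seq [seq (lam i * p.1, p.2) | p <- Pi i] | i <- enum 'I_n].

Definition in_simplex n (lam : 'I_n -> R) : Prop :=
  (forall i, 0 <= lam i) /\ \sum_i lam i = 1.

Definition in_PF n (Pi : 'I_n -> fdist) (i : 'I_n) : Prop :=
  ~ exists i', gtp (mean (Pi i')) (mean (Pi i)).

Definition in_CDUS n (Pi : 'I_n -> fdist) (i : 'I_n) : Prop :=
  ~ exists lam, in_simplex lam /\ ddom (mixture lam Pi) (Pi i).

End Defs.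

From HB Require Import structures.
From mathcomp Require Import all_boot all_order all_algebra.
From mathcomp Require Import reals.
From mathcomp Require Import lra.
Set Implicit Arguments. Unset Strict Implicit. Unset Printing Implicit Defensive.
Import Order.TTheory GRing.Theory Num.Theory.
Local Open Scope ring_scope.

(** Take the deterministic policies with returns (0,1) and (2,0) and the
    policy returning (0,0) or (1,1) with probability 1/2 each.  The mean
    (1/2,1/2) of the last one is not Pareto dominated, yet the even mixture of
    the first two dominates it distributionally: the joint CDF of the mixture
    is pointwise below its CDF (an outcome dominated by (2,0) and by (0,1) is
    dominated by (1,1)), and the first marginal of the mixture, uniform on
    {0,2}, strictly dominates the one of the policy, uniform on {0,1}. *)

Section FiniteDistributions.
Variables (R : realType) (d : nat).
Implicit Types u v x : 'rV[R]_d.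

Definition dirac v : fdist R d := [:: (1, v)].
Definition coin u v : fdist R d := [:: (2^-1, u); (2^-1, v)].

Lemma valid_dirac v : valid_fdist (dirac v).
Proof. by split=> [p /[!inE] /eqP-> //|]; rewrite big_seq1. Qed.

Lemma valid_coin u v : valid_fdist (coin u v).
Proof.
split=> [p /[!inE] /orP[] /eqP-> /=|]; rewrite ?invr_ge0 ?ler0n //.
by rewrite !big_cons big_nil addr0 -mulr2n -[_ *+ 2]mulr_natr mulVf ?pnatr_eq0.
Qed.

Lemma mean_dirac v : mean (dirac v) = v.
Proof. by rewrite /mean big_seq1 scale1r. Qed.

Lemma mean_coin u v : mean (coin u v) = 2^-1 *: (u + v).
Proof. by rewrite /mean !big_cons big_nil addr0 scalerDr. Qed.

Lemma cdf_dirac v x : cdf (dirac v) x = (lep v x)%:R.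
Proof. by rewrite /cdf big_seq1 mul1r. Qed.

Lemma cdf_coin u v x :
  cdf (coin u v) x = 2^-1 * (lep u x)%:R + 2^-1 * (lep v x)%:R.
Proof. by rewrite /cdf !big_cons big_nil addr0. Qed.

Lemma mcdf_dirac v j t : mcdf (dirac v) j t = ((v 0 j <= t)%R : bool)%:R.
Proof. by rewrite /mcdf big_seq1 mul1r. Qed.

Lemma mcdf_coin u v j t :
  mcdf (coin u v) j t
    = 2^-1 * ((u 0 j <= t)%R : bool)%:R + 2^-1 * ((v 0 j <= t)%R : bool)%:R.
Proof. by rewrite /mcdf !big_cons big_nil addr0. Qed.

Lemma big_mixture n (lam : 'I_n -> R) (Pi : 'I_n -> fdist R d)
    (f : 'rV[R]_d -> R) :
  \sum_(p <- mixture lam Pi) p.1 * f p.2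
    = \sum_i lam i * \sum_(p <- Pi i) p.1 * f p.2.
Proof.
rewrite big_flatten big_map big_enum /=; apply: eq_bigr => i _.
by rewrite big_map mulr_sumr; apply: eq_bigr => p _; rewrite mulrA.
Qed.

Lemma cdf_mixture n (lam : 'I_n -> R) (Pi : 'I_n -> fdist R d) x :
  cdf (mixture lam Pi) x = \sum_i lam i * cdf (Pi i) x.
Proof. exact: (big_mixture _ _ (fun v => (lep v x)%:R)). Qed.

Lemma mcdf_mixture n (lam : 'I_n -> R) (Pi : 'I_n -> fdist R d) j t :
  mcdf (mixture lam Pi) j t = \sum_i lam i * mcdf (Pi i) j t.
Proof. exact: (big_mixture _ _ (fun v => ((v 0 j <= t)%R : bool)%:R)). Qed.

End FiniteDistributions.

Lemma forall_ord2 (P : pred 'I_2) : [forall i, P i] = P 0 && P 1.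
Proof.
apply/forallP/andP=> [|[P0 P1] [[|[|//]] i2]]; first by split.
- by rewrite (_ : Ordinal i2 = 0) //; apply: val_inj.
- by rewrite (_ : Ordinal i2 = 1) //; apply: val_inj.
Qed.

Lemma exists_ord2 (P : pred 'I_2) : [exists i, P i] = P 0 || P 1.
Proof. by apply/negb_inj; rewrite negb_exists forall_ord2 negb_or. Qed.

Section Plane.
Variable R : realType.

Definition vec2 (a b : R) : 'rV[R]_2 := \row_(j < 2) [:: a; b]`_j.

Lemma vec2_0 a b : vec2 a b 0 0 = a. Proof. by rewrite mxE. Qed.
Lemma vec2_1 a b : vec2 a b 0 1 = b. Proof. by rewrite mxE. Qed.

Lemma lep_vec2 a b x : lep (vec2 a b) x = (a <= x 0 0) && (b <= x 0 1).
Proof. by rewrite /lep forall_ord2 vec2_0 vec2_1. Qed.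

Lemma gtp_vec2 (u : 'rV[R]_2) a b :
  gtp u (vec2 a b)
    = [&& a <= u 0 0, b <= u 0 1 & (a < u 0 0) || (b < u 0 1)].
Proof. by rewrite /gtp forall_ord2 exists_ord2 vec2_0 vec2_1 andbA. Qed.

End Plane.

Section Counterexample.
Variable R : realType.

Definition example (i : 'I_3) : fdist R 2 :=
  match val i with
  | 0 => dirac (vec2 0 1)
  | 1 => dirac (vec2 2 0)
  | _ => coin (vec2 0 0) (vec2 1 1)
  end.

Definition even_weights (i : 'I_3) : R := if i == ord_max then 0 else 2^-1.

Lemma valid_example i : valid_fdist (example i).
Proof.
case: i => [[|[|[|//]]] ?]; rewrite /example /=;
  by apply: valid_dirac || apply: valid_coin.
Qed.

Lemma mean_example_max : mean (example ord_max) = vec2 2^-1 2^-1.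
Proof.
rewrite mean_coin; apply/rowP=> j; rewrite !mxE.
by case: j => [[|[|//]] ?]; rewrite /= ?mxE; lra.
Qed.

Lemma example_max_in_PF : in_PF example ord_max.
Proof.
case=> i; rewrite mean_example_max gtp_vec2.
case: i => [[|[|[|//]]] ?];
  rewrite /example /= ?mean_dirac ?mean_example_max ?vec2_0 ?vec2_1;
  by move=> /and3P[? ? /orP[]]; lra.
Qed.

Lemma even_weights_in_simplex : in_simplex even_weights.
Proof.
split=> [i|]; first by rewrite /even_weights; case: ifP => _; lra.
by rewrite !big_ord_recr big_ord0 /even_weights /=; lra.
Qed.

Lemma cdf_even_mixture x :
  cdf (mixture even_weights example) x
    = 2^-1 * (lep (vec2 0 1) x)%:R + 2^-1 * (lep (vec2 2 0) x)%:R.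
Proof.
rewrite cdf_mixture !big_ord_recr big_ord0 /even_weights /example /=.
by rewrite !cdf_dirac mul0r add0r addr0.
Qed.

Lemma mcdf_even_mixture t :
  mcdf (mixture even_weights example) 0 t
    = 2^-1 * ((0 <= t)%R : bool)%:R + 2^-1 * ((2 <= t)%R : bool)%:R.
Proof.
rewrite mcdf_mixture !big_ord_recr big_ord0 /even_weights /example /=.
by rewrite !mcdf_dirac !vec2_0 mul0r add0r addr0.
Qed.

Lemma even_mixture_fsd_ge :
  fsd_ge (mixture even_weights example) (example ord_max).
Proof.
move=> x; rewrite cdf_even_mixture cdf_coin !lep_vec2.
have [] := lerP 0 (x 0 0); have [] := lerP 1 (x 0 0);
  have [] := lerP 2 (x 0 0); have [] := lerP 0 (x 0 1);
  have [] := lerP 1 (x 0 1); move=> /= *; lra.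
Qed.

Lemma even_mixture_first_marginal_gt :
  mfsd_gt (mixture even_weights example) (example ord_max) 0.
Proof.
split=> [t|]; rewrite /example /=.
  rewrite mcdf_even_mixture mcdf_coin !vec2_0.
  by have [] := lerP 0 t; have [] := lerP 1 t; have [] := lerP 2 t;
    move=> /= *; lra.
exists 1; rewrite mcdf_even_mixture mcdf_coin !vec2_0.
by rewrite ler01 lexx; have [] := lerP 2 (1 : R); move=> /= *; lra.
Qed.

Lemma even_mixture_ddom : ddom (mixture even_weights example) (example ord_max).
Proof.
split; first exact: even_mixture_fsd_ge.
by exists 0; exact: even_mixture_first_marginal_gt.
Qed.

End Counterexample.

Theorem mainTheorem13 (R : realType) :
  exists (d n : nat) (Pi : 'I_n -> fdist R d),
    (forall i, valid_fdist (Pi i)) /\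
    exists i : 'I_n, in_PF Pi i /\ ~ in_CDUS Pi i.
Proof.
exists 2, 3, (@example R); split; first exact: valid_example.
exists ord_max; split; first exact: example_max_in_PF.
apply; exists (@even_weights R).
by split; [exact: even_weights_in_simplex | exact: even_mixture_ddom].
Qed.
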